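(* Let $\Omega\subset\mathbb{R}^2$ and let $\Omega^\diamond=\{(p,q)\in\mathbb{R}^{2*}\mid px-qy\ge1\ \forall(x,y)\in\Omega\}$ be its antipolar set. Let $\gamma\colon(-1,1)\to\mathbb{R}^{2*}$ be a continuously differentiable curve such that \[ \gamma(0)=\omega^\diamond\in\Omega^\diamond, \qquad \dot{\gamma}(0)\notin\{\lambda\omega^\diamond\mid \lambda\in\mathbb{R}\}. \] Assume that there exists $\delta>0$ such that for every $\alpha\in(0,\delta)$ \begin{enumerate} \item[---] $(1-\alpha)\omega^\diamond\in\Omega^\diamond,$ \item[---] $\gamma(-\alpha)\in\Omega^\diamond,\quad\gamma(\alpha)\in\Omega^\diamond$. \end{enumerate} Then $\omega^\diamond\in\mathrm{int}\,\Omega^\diamond$. Conversely, if there is a continuously differentiable curve $\gamma\colon(-1,1)\to\mathbb{R}^{2*}$ with $\gamma(0)=\omega^\diamond$ and $\dot{\gamma}(0)\notin\{\lambda\omega^\diamond\mid \lambda\in\mathbb{R}\}$ for which no such $\delta>0$ exists, then the point $\omega^\diamond$ lies on the boundary $\partial\Omega^\diamond$ of the antipolar set.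
   Context: $\Omega\subset\mathbb{R}^2$ is a non-empty, convex, closed set not containing the origin and satisfying the ray property $\lambda\Omega\subset\Omega$ for all $\lambda>1$ (Assumption (i)), and $\Omega$ is strictly separated from the origin, so that its antipolar set $\Omega^\diamond=\{(p,q)\in\mathbb{R}^{2*}\mid px-qy\ge1\ \forall(x,y)\in\Omega\}$ is non-empty, convex and closed and also satisfies Assumption (i). Here $\mathbb{R}^{2*}$ is the dual space of $\mathbb{R}^2$. *)

From HB Require Import structures.
From mathcomp Require Import all_boot all_order all_algebra.
From mathcomp Require Import all_classical all_reals all_analysis.
Set Implicit Arguments. Unset Strict Implicit. Unset Printing Implicit Defensive.
Import Order.TTheory GRing.Theory Num.Theory.
Import numFieldNormedType.Exports.
Local Open Scope classical_set_scope.
Local Open Scope ring_scope.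

(* Points of R^2 and of its dual R^{2*} are both represented as pairs in R * R.
   The duality pairing is <(p,q),(x,y)> = p x - q y, as in the paper. *)

Definition antipolar (R : realType) (Om : set (R * R)) : set (R * R) :=
  [set pq | forall xy, Om xy -> 1 <= pq.1 * xy.1 - pq.2 * xy.2].

Definition convex_set2 (R : realType) (A : set (R * R)) : Prop :=
  forall a b t, A a -> A b -> 0 <= t -> t <= 1 ->
    A (t * a.1 + (1 - t) * b.1, t * a.2 + (1 - t) * b.2).

Definition ray_property (R : realType) (A : set (R * R)) : Prop :=
  forall lam a, 1 < lam -> A a -> A (lam * a.1, lam * a.2).

(* strict separation from the origin by a line: some linear functional is
   >= 1 on A (equivalently >= c > 0 after rescaling), while it is 0 at 0 *)
Definition strictly_separated_from_origin (R : realType) (A : set (R * R)) : Prop :=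
  exists pq : R * R, forall xy, A xy -> 1 <= pq.1 * xy.1 - pq.2 * xy.2.

Definition boundary (T : topologicalType) (A : set T) : set T :=
  closure A `\` interior A.

Definition C1_on_unit (R : realType) (g : R -> R * R) : Prop :=
  (forall t, -1 < t < 1 -> derivable g t 1) /\
  (forall t, -1 < t < 1 -> {for t, continuous (fun s => 'D_1 g s)}).

Definition not_collinear (R : realType) (d w : R * R) : Prop :=
  ~ (exists lam : R, d = (lam * w.1, lam * w.2)).

Definition good_delta (R : realType) (Om : set (R * R)) (g : R -> R * R) (w : R * R) : Prop :=
  exists2 delta : R, 0 < delta &
    forall alpha, 0 < alpha < delta ->
      [/\ antipolar Om ((1 - alpha) * w.1, (1 - alpha) * w.2),
          antipolar Om (g (- alpha)) & antipolar Om (g alpha)].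

From HB Require Import structures.
From mathcomp Require Import all_boot all_order all_algebra.
From mathcomp Require Import all_classical all_reals all_analysis.
From mathcomp Require Import ring lra.
Import Order.TTheory GRing.Theory Num.Theory.
Import numFieldNormedType.Exports.
Local Open Scope classical_set_scope.
Local Open Scope ring_scope.

(* The antipolar set is the intersection of the half-planes {P | <P, x> >= 1},
   x in Om.  Use coordinates (s, t) in the basis (w, g'(0)).  For small a > 0
   the point (1 - a) w sits at (1 - a, 0), and g(a), g(-a) sit within a of
   s = 1 with t > a/2, resp. t < -a/2.  A half-plane containing these three
   points satisfies a |<g'(0), x>| < 4 <w, x>, and therefore contains the box
   s > 1 - a/2, |t| < a^2/8, a neighbourhood of w that does not depend on x.
   Conversely, if w is interior, continuity of g and of a |-> (1 - a) w at 0
   yields delta. *)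

Definition pairing {R : realType} (P xy : R * R) : R := P.1 * xy.1 - P.2 * xy.2.

Lemma pairingDZl {R : realType} (P Q xy : R * R) (h : R) :
  pairing (P + h *: Q) xy = pairing P xy + h * pairing Q xy.
Proof. rewrite /pairing /= -![_ *: _]/(_ * _); ring. Qed.

Lemma pairingZl {R : realType} (P xy : R * R) (h : R) :
  pairing (h *: P) xy = h * pairing P xy.
Proof. rewrite /pairing /= -![_ *: _]/(_ * _); ring. Qed.

Lemma continuous_pairingl {R : realType} (xy : R * R) : continuous (pairing^~ xy).
Proof. by move=> P; apply: cvgB; apply: cvgMr_tmp; [exact: cvg_fst | exact: cvg_snd]. Qed.

Section HalfPlaneEstimates.
Context {R : realType}.
Implicit Types a s t F G : R.

Lemma side_point_bound {a s t F G} : 0 < a < 1 -> 0 < F ->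
  `|s - 1| < a -> a / 2 < t -> 1 <= s * F + t * G -> - (4 * F) < a * G.
Proof.
move=> /andP[a_gt0 a_lt1] F_gt0; rewrite ltr_norml => /andP[_ s_lt] t_gt side.
have [G_ge0|G_lt0] := lerP 0 G; first nra.
have : t * G <= a / 2 * G by rewrite ler_wnM2r // ltW.
nra.
Qed.

Lemma center_point_bound {a s t F G} : 0 < a -> 1 <= (1 - a) * F ->
  a * `|G| < 4 * F -> 1 - a / 2 < s -> `|t| < a ^+ 2 / 8 -> 1 <= s * F + t * G.
Proof.
move=> a_gt0 F_far aG_lt s_gt t_small.
have F_gt0 : 0 < F by have := normr_ge0 G; nra.
have sF_ge : (1 - a / 2) * F <= s * F by rewrite ler_pM2r // ltW.
have tG_ge : - (a / 2 * F) <= t * G.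
  have : `|t * G| <= a ^+ 2 / 8 * `|G| by rewrite normrM ler_wpM2r // ltW.
  rewrite ler_norml => /andP[tG_ge _].
  have : a / 8 * (a * `|G|) <= a / 8 * (4 * F) by rewrite ler_pM2l ?ltW // divr_gt0.
  lra.
lra.
Qed.

End HalfPlaneEstimates.

Section DualBasis.
Context {R : realType}.
Variables w d : R * R.

Definition det2 : R := w.1 * d.2 - w.2 * d.1.

Lemma not_collinear_det2_neq0 : w != 0 -> not_collinear d w -> det2 != 0.
Proof.
move=> w_neq0 ncol; apply/eqP => det0; apply: ncol.
have [w1_0|w1_neq0] := eqVneq w.1 0.
  have w2_neq0 : w.2 != 0.
    by apply: contraNneq w_neq0 => w2_0; rewrite [w]surjective_pairing w1_0 w2_0.
  have d1_0 : d.1 = 0.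
    by apply/eqP; move: det0; rewrite /det2 w1_0 mul0r sub0r => /eqP;
      rewrite oppr_eq0 mulf_eq0 (negbTE w2_neq0).
  by exists (d.2 / w.2); rewrite w1_0 mulr0 divfK // -d1_0 -surjective_pairing.
have cross : w.1 * d.2 = w.2 * d.1 by apply/eqP; rewrite -subr_eq0; apply/eqP.
exists (d.1 / w.1); rewrite divfK // [d in LHS]surjective_pairing; congr (_, _).
by apply: (mulfI w1_neq0); rewrite cross; field.
Qed.

Hypothesis det2_neq0 : det2 != 0.

(* The coordinates of a covector in the basis (w, d) of R^{2*} are its pairings
   with these two vectors of R^2. *)
Definition dual_w : R * R := (d.2 / det2, d.1 / det2).
Definition dual_d : R * R := (- (w.2 / det2), - (w.1 / det2)).

Lemma pairing_dual_basis :
  [/\ pairing w dual_w = 1, pairing w dual_d = 0,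
      pairing d dual_w = 0 & pairing d dual_d = 1].
Proof.
by move: det2_neq0; rewrite /pairing /dual_w /dual_d /det2 /= => ?; split; field.
Qed.

Lemma pairing_dual_decomposition (P xy : R * R) :
  pairing P xy = pairing P dual_w * pairing w xy + pairing P dual_d * pairing d xy.
Proof. by move: det2_neq0; rewrite /pairing /dual_w /dual_d /det2 /= => ?; field. Qed.

Lemma antipolar_dual_box (Om : set (R * R)) (a : R) (p q u : R * R) :
  0 < a < 1 -> antipolar Om ((1 - a) *: w) ->
  antipolar Om p -> `|pairing p dual_w - 1| < a -> a / 2 < pairing p dual_d ->
  antipolar Om q -> `|pairing q dual_w - 1| < a -> pairing q dual_d < - (a / 2) ->
  1 - a / 2 < pairing u dual_w -> `|pairing u dual_d| < a ^+ 2 / 8 ->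
  antipolar Om u.
Proof.
move=> a01 A_shrunk Ap p_w p_d Aq q_w q_d u_w u_d xy Om_xy.
have /andP[a_gt0 a_lt1] := a01.
have decomp P := pairing_dual_decomposition P xy.
set F := pairing w xy; set G := pairing d xy.
have F_far : 1 <= (1 - a) * F by rewrite -pairingZl; exact: A_shrunk.
have F_gt0 : 0 < F by nra.
have Gp : - (4 * F) < a * G.
  by apply: (side_point_bound a01 F_gt0 p_w p_d); rewrite -decomp; exact: Ap.
have Gq : - (4 * F) < a * - G.
  apply: (side_point_bound a01 F_gt0 q_w (t := - pairing q dual_d)); first lra.
  by rewrite mulrNN -decomp; exact: Aq.
have aG_lt : a * `|G| < 4 * F.
  by rewrite -[a]gtr0_norm // -normrM ltr_norml; lra.
change (1 <= pairing u xy); rewrite decomp.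
exact: center_point_bound a_gt0 F_far aG_lt u_w u_d.
Qed.

End DualBasis.

Lemma antipolar_neq0 {R : realType} (Om : set (R * R)) (w : R * R) :
  Om !=set0 -> antipolar Om w -> w != 0.
Proof.
by move=> [xy Om_xy] Aw; apply/eqP => w0; have := Aw xy Om_xy; rewrite w0 /= !mul0r subr0 ler10.
Qed.

Lemma derivable_difference_quotient {R : realType} {V : normedModType R} {g : R -> V} {x : R} :
  derivable g x 1 -> h^-1 *: (g (h + x) - g x) @[h --> 0^'] --> 'D_1 g x.
Proof.
move=> g_der; have -> : (fun h => h^-1 *: (g (h + x) - g x)) =
    (fun h => h^-1 *: ((g \o shift x) (h *: 1) - g x)).
  by apply: funext => h /=; rewrite [h *: 1]mulr1.
exact: g_der.
Qed.

Lemma dnbhs0_sym {R : realType} {P : R -> Prop} : (\forall h \near 0^', P h) ->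
  exists2 e : R, 0 < e & forall a, 0 < a < e -> P a /\ P (- a).
Proof.
move=> /nbhs_ballP[e e_gt0 Pe]; exists e => // a /andP[a_gt0 a_lt].
by split; apply: Pe; rewrite /ball /= ?sub0r ?normrN ?gtr0_norm ?oppr_eq0 ?gt_eqF.
Qed.

Section CurveSidePoints.
Context {R : realType}.
Variable g : R -> R * R.
Local Notation w := (g 0).
Local Notation d := ('D_1 g 0).
Hypotheses (g_der : derivable g 0 1) (det_neq0 : det2 w d != 0).

Lemma curve_side_points : exists2 e : R, 0 < e & forall a, 0 < a < e ->
  [/\ `|pairing (g a) (dual_w w d) - 1| < a, a / 2 < pairing (g a) (dual_d w d),
      `|pairing (g (- a)) (dual_w w d) - 1| < a & pairing (g (- a)) (dual_d w d) < - (a / 2)].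
Proof.
have [ww wd dw dd] := pairing_dual_basis _ _ det_neq0.
pose r h := h^-1 *: (g (h + 0) - g 0).
have r_cvg : r h @[h --> 0^'] --> d := derivable_difference_quotient g_der.
have r_w : pairing (r h) (dual_w w d) @[h --> 0^'] --> 0.
  by have := cvg_comp _ _ r_cvg (continuous_pairingl (dual_w w d) d); rewrite dw.
have r_d : pairing (r h) (dual_d w d) @[h --> 0^'] --> (1 : R).
  by have := cvg_comp _ _ r_cvg (continuous_pairingl (dual_d w d) d); rewrite dd.
have r_near : \forall h \near 0^',
    `|pairing (r h) (dual_w w d)| < 1 /\ 1 / 2 < pairing (r h) (dual_d w d).
  apply: filterI.
    by apply: (cvgr_norm_lt _ r_w); rewrite normr0.
  by apply: (cvgr_gt _ r_d); lra.
have [e e_gt0 r_pm] := dnbhs0_sym r_near.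
exists e => // a a_bounds.
have [[rp_w rp_d] [rm_w rm_d]] := r_pm a a_bounds.
have /andP[a_gt0 _] := a_bounds.
have a_neq0 : a != 0 by rewrite gt_eqF.
have g_r h : h != 0 -> g h = w + h *: r h.
  by move=> h_neq0; rewrite /r addr0 scalerA mulfV // scale1r addrC subrK.
have g_w h : h != 0 -> pairing (g h) (dual_w w d) - 1 = h * pairing (r h) (dual_w w d).
  by move=> h_neq0; rewrite g_r // pairingDZl ww addrAC subrr add0r.
have g_d h : h != 0 -> pairing (g h) (dual_d w d) = h * pairing (r h) (dual_d w d).
  by move=> h_neq0; rewrite g_r // pairingDZl wd add0r.
rewrite !g_w ?g_d ?oppr_eq0 // !normrM normrN (gtr0_norm a_gt0) !gtr_pMr //.
by split=> //; nra.
Qed.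

End CurveSidePoints.

Lemma interior_antipolar_of_good_delta {R : realType} (Om : set (R * R)) (w : R * R)
    (g : R -> R * R) :
  Om !=set0 -> antipolar Om w -> derivable g 0 1 -> g 0 = w ->
  not_collinear ('D_1 g 0) w -> good_delta Om g w -> interior (antipolar Om) w.
Proof.
move=> Om_neq0 Aw g_der g0 ncol [del del_gt0 A_del].
set d := 'D_1 g 0 in ncol.
have det_neq0 : det2 w d != 0.
  by apply: not_collinear_det2_neq0 => //; exact: antipolar_neq0 Om_neq0 Aw.
have [ww wd _ _] := pairing_dual_basis _ _ det_neq0.
have [e e_gt0 g_pm] := curve_side_points _ g_der ltac:(by rewrite g0).
pose m := Num.min (Num.min e del) 1.
have m_gt0 : 0 < m by rewrite !lt_min e_gt0 del_gt0 ltr01.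
pose a := m / 2.
have a_gt0 : 0 < a by rewrite divr_gt0.
have [a_lt_e a_lt_del a_lt1] : [/\ a < e, a < del & a < 1].
  have : a < m by rewrite /a; lra.
  by rewrite /m !lt_min => /andP[/andP[-> ->] ->].
have a01 : 0 < a < 1 by rewrite a_gt0.
have [A_shrunk A_minus A_plus] := A_del a ltac:(by rewrite a_gt0).
have [p_w p_d q_w q_d] := g_pm a ltac:(by rewrite a_gt0); rewrite g0 in p_w p_d q_w q_d.
have u_w : pairing u (dual_w w d) @[u --> w] --> (1 : R).
  by rewrite -ww; exact: continuous_pairingl.
have u_d : pairing u (dual_d w d) @[u --> w] --> (0 : R).
  by rewrite -wd; exact: continuous_pairingl.
apply: filterS (filterI (cvgr_gt _ u_w (1 - a / 2) _) (cvgr_norm_lt _ u_d (a ^+ 2 / 8) _)).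
- move=> u [u_w_near u_d_near].
  exact: (antipolar_dual_box _ _ det_neq0 _ _ _ _ _ a01 A_shrunk A_plus p_w p_d A_minus q_w q_d u_w_near u_d_near).
- lra.
- by rewrite normr0 divr_gt0 ?exprn_gt0.
Qed.

Lemma boundary_antipolar_of_not_good_delta {R : realType} (Om : set (R * R)) (w : R * R)
    (g : R -> R * R) :
  antipolar Om w -> {for 0, continuous g} -> g 0 = w -> ~ good_delta Om g w ->
  boundary (antipolar Om) w.
Proof.
move=> Aw g_cont g0 not_good; split; first exact: subset_closure.
move=> w_int; apply: not_good.
have g_near : \forall h \near 0, antipolar Om (g h).
  by apply: g_cont; rewrite g0.
have shrunk_near : \forall h \near 0, antipolar Om ((1 - h) *: w).
  have : (1 - h) *: w @[h --> (0 : R)] --> (1 - 0) *: w.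
    by apply: cvgZr_tmp; apply: cvgB; [exact: cvg_cst | exact: cvg_id].
  by rewrite subr0 scale1r; apply.
have [e e_gt0 A_near] := dnbhs0_sym (nbhs_dnbhs (filterI g_near shrunk_near)).
exists e => // a a_bounds.
by have [[A_plus A_shrunk] [A_minus _]] := A_near a a_bounds.
Qed.

Lemma C1_on_unit_derivable0 {R : realType} (g : R -> R * R) : C1_on_unit g -> derivable g 0 1.
Proof. by case=> g_der _; apply: g_der; rewrite ltrN10 ltr01. Qed.

Theorem lemma3 (R : realType) (Om : set (R * R)) (w : R * R) :
  Om !=set0 -> convex_set2 Om -> closed Om -> ~ Om (0, 0) ->
  ray_property Om -> strictly_separated_from_origin Om ->
  antipolar Om w ->
  (forall g : R -> R * R, C1_on_unit g -> g 0 = w -> not_collinear ('D_1 g 0) w ->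
     good_delta Om g w -> interior (antipolar Om) w) /\
  (forall g : R -> R * R, C1_on_unit g -> g 0 = w -> not_collinear ('D_1 g 0) w ->
     ~ good_delta Om g w -> boundary (antipolar Om) w).
Proof.
move=> Om_neq0 _ _ _ _ _ Aw; split=> g /C1_on_unit_derivable0 g_der g0 ncol.
  exact: interior_antipolar_of_good_delta.
apply: boundary_antipolar_of_not_good_delta => //.
exact/differentiable_continuous/derivable1_diffP.
Qed.
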